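(* Let $\mathcal{X}\subseteq\mathbb{R}^n$, let $f=(f_1,\dots,f_m):\mathcal{X}\to\mathbb{R}^m$, let $\alpha\in\mathbb{R}^m$, and define \[ \mathcal{F}=\{f(x)\mid x\in\mathcal{X}\},\qquad \mathcal{G}=\Bigl\{\frac{f(x)}{\sum_{i=1}^m\alpha_if_i(x)}\Bigm| x\in\mathcal{X}\Bigr\}. \] Assume $\mathcal{F}$ and $\mathcal{G}$ are nonempty and there is $\epsilon>0$ with $\sum_{i=1}^m\alpha_if_i(x)>\epsilon$ for all $x\in\mathcal{X}$. Then: (i) If $\mathcal{F}$ is bounded, then $\operatorname{conv}(\mathcal{G})=\{g\in\mathbb{R}^m\mid \exists\rho\ge0 \text{ with } g\in\rho\operatorname{conv}(\mathcal{F}),\ \alpha^\top g=1\}$. (ii) If $\mathcal{F}$ is bounded and in addition $f_1(x)=1$ for all $x\in\mathcal{X}$, then $\operatorname{conv}(\mathcal{F})=\{f\in\mathbb{R}^m\mid \exists\sigma\ge0\text{ with } f\in\sigma\operatorname{conv}(\mathcal{G}),\ f_1=1\}$. (iii) (Without assuming boundedness of $\mathcal{F}$.) $\operatorname{cl}\operatorname{conv}(\mathcal{G})=\{g\in\mathbb{R}^m\mid\exists\rho\ge0\text{ with } g\in\rho\operatorname{cl}\operatorname{conv}(\mathcal{F}),\ \alpha^\top g=1\}$.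
   Context: For a set $K$ and $\lambda\ge0$: $\lambda K=\{\lambda k\mid k\in K\}$ if $\lambda>0$, and $0K$ denotes the recession cone of $K$. $\operatorname{cl}$ denotes closure and $\operatorname{conv}$ convex hull. *)

From mathcomp Require Import all_boot all_order all_algebra.
From mathcomp Require Import all_classical all_reals all_analysis.
Set Implicit Arguments. Unset Strict Implicit. Unset Printing Implicit Defensive.
Import Order.TTheory GRing.Theory Num.Theory.
Local Open Scope classical_set_scope.
Local Open Scope ring_scope.

Definition conv_hull (R : realType) (m : nat) (A : set 'rV[R]_m) : set 'rV[R]_m :=
  [set g | exists (k : nat) (l : 'I_k -> R) (v : 'I_k -> 'rV[R]_m),
      (forall i, 0 <= l i) /\ \sum_(i < k) l i = 1 /\
      (forall i, A (v i)) /\ g = \sum_(i < k) l i *: v i].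

Definition rec_cone (R : realType) (m : nat) (K : set 'rV[R]_m) : set 'rV[R]_m :=
  [set d | forall k, K k -> forall t : R, 0 <= t -> K (k + t *: d)].

(* lambda K : dilation for lambda > 0, recession cone for lambda = 0
   (only used with lambda >= 0) *)
Definition scale_set (R : realType) (m : nat) (lam : R) (K : set 'rV[R]_m)
  : set 'rV[R]_m :=
  if 0 < lam then [set lam *: k | k in K] else rec_cone K.

Definition bounded_vecs (R : realType) (m : nat) (A : set 'rV[R]_m) : Prop :=
  exists M : R, forall y, A y -> forall i : 'I_m, `|y 0 i| <= M.

Definition dotv (R : realType) (m : nat) (a y : 'rV[R]_m) : R :=
  \sum_(i < m) a 0 i * y 0 i.

From mathcomp Require Import all_boot all_order all_algebra.
From mathcomp Require Import all_classical all_reals all_analysis.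
From mathcomp Require Import ring lra.
Set Implicit Arguments. Unset Strict Implicit. Unset Printing Implicit Defensive.
Import Order.TTheory GRing.Theory Num.Theory.
Import numFieldNormedType.Exports.
Local Open Scope classical_set_scope.
Local Open Scope ring_scope.

(* Normalizing by [alpha^T] maps a convex combination [sum_i l_i y_i] of points
   of F to the convex combination of the normalized points [y_i / alpha^T y_i]
   with weights proportional to [l_i alpha^T y_i].  Hence conv G consists of
   the normalized points of conv F, i.e. of the [rho c] with [c] in conv F,
   [alpha^T (rho c) = 1] and [0 < rho <= 1/eps].  A nonempty bounded set has a
   trivial recession cone, which excludes [rho = 0] in (i) and (ii).
   In (iii) a point [g] of cl conv G is a limit of points [r c] with [c] in
   conv F and [r] in the compact interval [[0, 1/eps]]; a cluster value
   [rho > 0] of the scales puts [g / rho] in cl conv F, while [rho = 0] makes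
   [g] a recession direction of cl conv F.  Conversely, such a direction [g]
   is the limit of the normalizations of [y + t g] as [t] grows. *)

Lemma mxentry_le_norm (R : realType) (p q : nat) (M : 'M[R]_(p, q)) i j :
  `|M i j| <= `|M|.
Proof.
have /mapP[k _ ->] : `|M i j| \in [seq `|M x.1 x.2| | x : 'I_p * 'I_q].
  by apply/mapP; exists (i, j) => //=; rewrite mem_enum.
by rewrite [leRHS]/Num.Def.normr /= mx_normrE; apply/bigmax_geP; right; exists k.
Qed.

Lemma div_addr1_le1 (R : realFieldType) (x : R) : 0 <= x -> x / (x + 1) <= 1.
Proof. by move=> x_ge0; rewrite ler_pdivrMr ?ltr_wpDl // mul1r lerDl. Qed.

Lemma convex_comb_gt (R : realFieldType) (k : nat) (l b : 'I_k -> R) (eps : R) :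
  (forall i, 0 <= l i) -> \sum_(i < k) l i = 1 -> (forall i, eps < b i) ->
  eps < \sum_(i < k) l i * b i.
Proof.
move=> l_ge0 l_sum1 b_gt; have b_gt0 i : 0 < b i - eps by rewrite subr_gt0.
have diff : \sum_(i < k) l i * (b i - eps) = \sum_(i < k) l i * b i - eps.
  by under eq_bigr do rewrite mulrBr; rewrite sumrB -mulr_suml l_sum1 mul1r.
rewrite -subr_gt0 -diff lt_def sumr_ge0 ?andbT; last by move=> i _; rewrite mulr_ge0 // ltW.
apply/eqP => /(psumr_eq0P (fun i _ => mulr_ge0 (l_ge0 i) (ltW (b_gt0 i)))) lb0.
have l0 i : l i = 0.
  by have /eqP := lb0 i isT; rewrite mulf_eq0 (gt_eqF (b_gt0 i)) orbF => /eqP.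
by move/eqP: l_sum1; rewrite big1 // eq_sym oner_eq0.
Qed.

Lemma closure_normP (R : realType) (m : nat) {A : set 'rV[R]_m} {p} :
  closure A p <-> forall e, 0 < e -> exists a, A a /\ `|p - a| < e.
Proof.
split=> [p_cl e e_gt0|near_p B /(@nbhs_normP R _ p)[e e_gt0 eB]].
  have p_nbhs : nbhs p [set q | `|p - q| < e] by apply/(@nbhs_normP R _ p); exists e.
  by have [a [Aa pa]] := p_cl _ p_nbhs; exists a.
by have [a [Aa pa]] := near_p e e_gt0; exists a; split => //; apply: eB.
Qed.

Lemma closure_shift (R : realType) (m : nat) (C : set 'rV[R]_m) d :
  (forall k, C k -> closure C (k + d)) -> forall k, closure C k -> closure C (k + d).
Proof.
move=> C_shift k /closure_normP k_cl; apply/closure_normP => e e_gt0.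
have e2_gt0 : 0 < e / 2 by rewrite divr_gt0.
have [k' [Ck' kk']] := k_cl _ e2_gt0.
have [q [Cq hq]] := closure_normP.1 (C_shift k' Ck') _ e2_gt0.
exists q; split => //; rewrite (_ : k + d - q = (k - k') + (k' + d - q)).
  by apply: le_lt_trans (ler_normD _ _) _; rewrite [e]splitr ltrD.
by rewrite !addrA subrK.
Qed.

Lemma segment_nested_cluster (R : realType) (M : R) (S : R -> set R) :
  (forall e, 0 < e -> S e !=set0) ->
  (forall e1 e2, 0 < e1 -> e1 <= e2 -> S e1 `<=` S e2) ->
  (forall e, 0 < e -> S e `<=` `[0, M]) ->
  exists rho, 0 <= rho /\ rho <= M /\
    forall e eta, 0 < e -> 0 < eta -> exists r, S e r /\ `|rho - r| < eta.
Proof.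
move=> S_neq0 S_mono S_seg.
have S_filter : Filter (filter_from [set e : R | 0 < e] S).
  apply: filter_from_filter; first by exists 1 => /=.
  move=> i j /= i_gt0 j_gt0; exists (Num.min i j) => /=; first by rewrite lt_min i_gt0 j_gt0.
  by move=> r Sr; split; apply: S_mono Sr; rewrite ?lt_min ?i_gt0 ?j_gt0 // ge_min lexx ?orbT.
have S_proper : ProperFilter (filter_from [set e : R | 0 < e] S).
  exact: filter_from_proper.
have S_in_seg : filter_from [set e : R | 0 < e] S `[0, M]%classic.
  by exists 1 => //=; apply: S_seg.
have [rho [rho_seg rho_cl]] := segment_compact S_proper S_in_seg.
move: rho_seg => /=; rewrite in_itv /= => /andP[rho_ge0 rho_le].
exists rho; split => //; split => // e eta e_gt0 eta_gt0.
have rho_nbhs : nbhs rho [set r | `|rho - r| < eta] by apply/(@nbhs_normP R _ rho); exists eta.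
have [r [Sr hr]] := rho_cl (S e) _ (ex_intro2 _ _ e e_gt0 (fun x h => h)) rho_nbhs.
by exists r.
Qed.

Section DotProduct.
Variables (R : realType) (m : nat) (a : 'rV[R]_m).

Lemma dotvD x y : dotv a (x + y) = dotv a x + dotv a y.
Proof. by rewrite /dotv -big_split; apply: eq_bigr => i _; rewrite mxE mulrDr. Qed.

Lemma dotvZ c x : dotv a (c *: x) = c * dotv a x.
Proof. by rewrite /dotv mulr_sumr; apply: eq_bigr => i _; rewrite mxE mulrCA. Qed.

Lemma dotvB x y : dotv a (x - y) = dotv a x - dotv a y.
Proof. by rewrite dotvD -scaleN1r dotvZ mulN1r. Qed.

Lemma dotv0 : dotv a 0 = 0.
Proof. by rewrite /dotv big1 // => i _; rewrite mxE mulr0. Qed.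

Lemma dotv_sum k (l : 'I_k -> R) (v : 'I_k -> 'rV[R]_m) :
  dotv a (\sum_(i < k) l i *: v i) = \sum_(i < k) l i * dotv a (v i).
Proof.
rewrite /dotv; under eq_bigr do rewrite summxE mulr_sumr.
rewrite exchange_big; apply: eq_bigr => i _; rewrite mulr_sumr.
by apply: eq_bigr => j _; rewrite mxE mulrCA.
Qed.

Lemma dotv_norm_le v : `|dotv a v| <= (\sum_(i < m) `|a 0 i|) * `|v|.
Proof.
rewrite /dotv mulr_suml; apply: le_trans (ler_norm_sum _ _ _) _.
apply: ler_sum => i _; rewrite normrM ler_wpM2l //; exact: mxentry_le_norm.
Qed.

Lemma dotv_continuous : continuous (dotv a).
Proof.
move=> y B /(@nbhs_normP R _ (dotv a y))[e e_gt0 eB].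
pose N := \sum_(i < m) `|a 0 i|.
have N1_gt0 : 0 < N + 1 by rewrite ltr_wpDl ?sumr_ge0.
apply/(@nbhs_normP R _ y); exists (e / (N + 1)); first by rewrite /= divr_gt0.
move=> t /= yt; apply: eB; rewrite /ball_ /= -dotvB.
apply: le_lt_trans (dotv_norm_le _) _; rewrite -/N.
apply: (@le_lt_trans _ _ (N * (e / (N + 1)))).
  by rewrite ler_wpM2l ?sumr_ge0 // ltW.
by rewrite mulrA ltr_pdivrMr // mulrDr mulr1 mulrC ltrDl.
Qed.

Definition normalize y := (dotv a y)^-1 *: y.

Lemma dotv_normalize y : dotv a y != 0 -> dotv a (normalize y) = 1.
Proof. by move=> y_neq0; rewrite dotvZ mulVf. Qed.

Lemma dotv_eq1_normalize rho c : dotv a (rho *: c) = 1 -> rho *: c = normalize c.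
Proof.
rewrite dotvZ => rho_c; have c_neq0 : dotv a c != 0.
  by apply: contra_eq_neq rho_c => ->; rewrite mulr0 eq_sym oner_neq0.
by rewrite /normalize; congr (_ *: _); apply: (mulIf c_neq0); rewrite mulVf.
Qed.

Lemma normalize_continuous y : dotv a y != 0 -> {for y, continuous normalize}.
Proof.
move=> y_neq0; have dotv_inv := @cvgV R _ _ (nbhs_filter y) _ _ y_neq0 (@dotv_continuous y).
exact: (@cvgZ R _ _ _ (nbhs_filter y) _ _ _ _ dotv_inv cvg_id).
Qed.

End DotProduct.

Section ConvexHull.
Variables (R : realType) (m : nat).
Implicit Types (A : set 'rV[R]_m) (a : 'rV[R]_m).

Lemma conv_hull_self A v : A v -> conv_hull A v.
Proof.
move=> Av; exists 1%N, (fun _ => 1), (fun _ => v).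
by rewrite !big_ord1 scale1r.
Qed.

Lemma conv_hull_convex A x y (s : R) :
  conv_hull A x -> conv_hull A y -> 0 <= s -> s <= 1 ->
  conv_hull A ((1 - s) *: x + s *: y).
Proof.
move=> [k1 [l1 [v1 [l1_ge0 [l1_sum [Av1 ->]]]]]].
move=> [k2 [l2 [v2 [l2_ge0 [l2_sum [Av2 ->]]]]]] s_ge0 s_le1.
exists (k1 + k2)%N.
exists (fun i => match fintype.split i with inl j => (1 - s) * l1 j | inr j => s * l2 j end).
exists (fun i => match fintype.split i with inl j => v1 j | inr j => v2 j end).
split; first by move=> i; case: (fintype.split i) => j; rewrite mulr_ge0 ?subr_ge0.
split.
  rewrite big_split_ord /=.
  under eq_bigr do rewrite (unsplitK (inl _)).
  under [X in _ + X]eq_bigr do rewrite (unsplitK (inr _)).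
  by rewrite -!mulr_sumr l1_sum l2_sum !mulr1 subrK.
split; first by move=> i; case: (fintype.split i).
rewrite big_split_ord /=.
under [X in _ = X + _]eq_bigr do rewrite (unsplitK (inl _)).
under [X in _ = _ + X]eq_bigr do rewrite (unsplitK (inr _)).
by rewrite !scaler_sumr; congr (_ + _); apply: eq_bigr => i _; rewrite scalerA.
Qed.

Lemma conv_hull_reweight A k (w : 'I_k -> R) (v : 'I_k -> 'rV[R]_m) :
  (forall i, 0 <= w i) -> (forall i, A (v i)) -> 0 < \sum_(i < k) w i ->
  conv_hull A ((\sum_(i < k) w i)^-1 *: \sum_(i < k) w i *: v i).
Proof.
move=> w_ge0 Av w_sum_gt0; exists k, (fun i => w i / \sum_(i < k) w i), v.
split; first by move=> i; rewrite divr_ge0 // ltW.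
split; first by rewrite -mulr_suml mulfV // gt_eqF.
by split => //; rewrite scaler_sumr; apply: eq_bigr => i _; rewrite scalerA mulrC.
Qed.

Lemma conv_hull_bounded A : bounded_vecs A -> bounded_vecs (conv_hull A).
Proof.
move=> [M AM]; exists M => _ [k [l [v [l_ge0 [l_sum [Av ->]]]]]] i.
rewrite summxE; apply: le_trans (ler_norm_sum _ _ _) _.
rewrite -[leRHS]mul1r -l_sum mulr_suml; apply: ler_sum => j _.
by rewrite mxE normrM ger0_norm // ler_wpM2l // AM.
Qed.

Lemma conv_hull_coord A (o : 'I_m) (c : R) :
  (forall y, A y -> y 0 o = c) -> forall p, conv_hull A p -> p 0 o = c.
Proof.
move=> Ac _ [k [l [v [l_ge0 [l_sum [Av ->]]]]]].
rewrite summxE -[RHS]mul1r -l_sum mulr_suml; apply: eq_bigr => i _.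
by rewrite mxE Ac.
Qed.

Lemma conv_hull_dotv_gt A a (eps : R) :
  (forall y, A y -> eps < dotv a y) -> forall c, conv_hull A c -> eps < dotv a c.
Proof.
move=> A_gt _ [k [l [v [l_ge0 [l_sum [Av ->]]]]]].
by rewrite dotv_sum; apply: convex_comb_gt => // i; apply: A_gt.
Qed.

Lemma rec_cone_bounded_eq0 (K : set 'rV[R]_m) k d :
  bounded_vecs K -> K k -> rec_cone K d -> d = 0.
Proof.
move=> [M KM] Kk Kd; apply/rowP => i; rewrite mxE.
apply/eqP; apply: contraT => d_neq0; have d_gt0 : 0 < `|d 0 i| by rewrite normr_gt0.
have k_le : `|k 0 i| <= M by apply: KM.
pose t := (M + `|k 0 i| + 1) / `|d 0 i|.
have t_ge0 : 0 <= t by rewrite divr_ge0 // !addr_ge0 // (le_trans _ k_le).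
have := KM _ (Kd k Kk t t_ge0) i; rewrite !mxE.
have : `|t * d 0 i| - `|k 0 i| <= `|k 0 i + t * d 0 i|.
  by rewrite [X in _ <= `|X|]addrC; apply: lerB_normD.
rewrite normrM (ger0_norm t_ge0) /t mulfVK ?gt_eqF //; lra.
Qed.

Definition scaled_limit A (rho : R) (g : 'rV[R]_m) : Prop :=
  forall e eta, 0 < e -> 0 < eta ->
  exists r c, [/\ A c, 0 < r, `|g - r *: c| < e & `|rho - r| < eta].

Lemma scaled_limit_closure A rho g :
  0 < rho -> scaled_limit A rho g -> closure A (rho^-1 *: g).
Proof.
move=> rho_gt0 g_lim; apply/closure_normP => e e_gt0.
pose N := `|g|; have N_ge0 : 0 <= N := normr_ge0 g.
have N1_gt0 : 0 < N + 1 by rewrite ltr_wpDl.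
pose eta := Num.min (rho / 2) (e * rho ^+ 2 / (4 * (N + 1))).
have eta_gt0 : 0 < eta by rewrite lt_min !divr_gt0 ?mulr_gt0 ?exprn_gt0.
have [r [c [Ac r_gt0 gc rr]]] := g_lim (e * rho / 4) eta
  (divr_gt0 (mulr_gt0 e_gt0 rho_gt0) (ltr0Sn R 3)) eta_gt0.
exists c; split => //.
have rr1 : `|rho - r| < rho / 2 by apply: lt_le_trans rr _; rewrite ge_min lexx.
have rr2 : `|r - rho| <= e * rho ^+ 2 / (4 * (N + 1)).
  by rewrite distrC; apply/ltW/(lt_le_trans rr); rewrite ge_min lexx orbT.
have r_gt : rho / 2 < r by have := ler_norm (rho - r); lra.
have -> : rho^-1 *: g - c = r^-1 *: ((g - r *: c) + (rho^-1 * (r - rho)) *: g).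
  by apply/rowP => j; rewrite !mxE; field; rewrite !gt_eqF.
rewrite normrZ ger0_norm ?invr_ge0 ?ltW // mulrC ltr_pdivrMr //.
apply: le_lt_trans (ler_normD _ _) _.
rewrite normrZ normrM ger0_norm ?invr_ge0 ?ltW // -/N.
have scale_err : rho^-1 * `|r - rho| * N <= e * rho / 4.
  apply: (@le_trans _ _ (rho^-1 * (e * rho ^+ 2 / (4 * (N + 1))) * N)).
    by rewrite ler_wpM2r // ler_wpM2l // invr_ge0 ltW.
  rewrite (_ : _ * N = (e * rho / 4) * (N / (N + 1))); last by field; rewrite !gt_eqF.
  by apply: ler_piMr; [rewrite divr_ge0 // mulr_ge0 // ltW | exact: div_addr1_le1].
have er : e * rho / 2 < e * r by rewrite -mulrA ltr_pM2l.
have : e * rho / 4 + e * rho / 4 = e * rho / 2 by field.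
lra.
Qed.

Lemma scaled_limit0_shift A g k (t : R) :
  scaled_limit (conv_hull A) 0 g -> conv_hull A k -> 0 <= t ->
  closure (conv_hull A) (k + t *: g).
Proof.
move=> g_lim Ak t_ge0; apply/closure_normP => e e_gt0.
pose N := `|k|; have N_ge0 : 0 <= N := normr_ge0 k.
have N1_gt0 : 0 < N + 1 by rewrite ltr_wpDl.
have t1_gt0 : 0 < t + 1 by rewrite ltr_wpDl.
pose eta := Num.min (1 / (t + 1)) (e / (3 * (t + 1) * (N + 1))).
have eta_gt0 : 0 < eta by rewrite lt_min !divr_gt0 // !mulr_gt0.
have [r [c [Ac r_gt0 gc]]] := g_lim (e / (3 * (t + 1))) eta
  (divr_gt0 e_gt0 (mulr_gt0 (ltr0Sn R 2) t1_gt0)) eta_gt0.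
rewrite sub0r normrN gtr0_norm // => r_lt.
have r_le1 : r <= 1 / (t + 1) by apply/ltW/(lt_le_trans r_lt); rewrite ge_min lexx.
have r_le2 : r <= e / (3 * (t + 1) * (N + 1)).
  by apply/ltW/(lt_le_trans r_lt); rewrite ge_min lexx orbT.
pose s := t * r; have s_ge0 : 0 <= s by rewrite mulr_ge0 // ltW.
have s_le1 : s <= 1.
  by rewrite (le_trans (ler_wpM2l t_ge0 r_le1)) // mul1r div_addr1_le1.
exists ((1 - s) *: k + s *: c); split; first exact: conv_hull_convex.
have -> : k + t *: g - ((1 - s) *: k + s *: c) = s *: k + t *: (g - r *: c).
  by apply/rowP => j; rewrite !mxE /s; ring.
apply: le_lt_trans (ler_normD _ _) _.
rewrite !normrZ (ger0_norm t_ge0) (ger0_norm (ltW r_gt0)) -/N -/s.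
have tt1_ge0 : 0 <= t / (t + 1) by rewrite divr_ge0 // ltW.
have NN1_ge0 : 0 <= N / (N + 1) by rewrite divr_ge0 // ltW.
have e3_gt0 : 0 < e / 3 by rewrite divr_gt0.
have k_err : s * N <= e / 3.
  apply: (@le_trans _ _ (t * (e / (3 * (t + 1) * (N + 1))) * N)).
    by rewrite ler_wpM2r // ler_wpM2l.
  rewrite (_ : _ * N = (e / 3) * ((t / (t + 1)) * (N / (N + 1)))); last first.
    by field; rewrite !gt_eqF.
  apply: ler_piMr; first exact: ltW.
  by apply: mulr_ile1; rewrite ?div_addr1_le1.
have g_err : t * `|g - r *: c| <= e / 3.
  apply: (@le_trans _ _ (t * (e / (3 * (t + 1))))); first by rewrite ler_wpM2l // ltW.
  rewrite (_ : t * _ = (e / 3) * (t / (t + 1))); last by field; rewrite gt_eqF.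
  by apply: ler_piMr; [exact: ltW | exact: div_addr1_le1].
have : e / 3 + e / 3 + e / 3 = e by field.
lra.
Qed.

Lemma scaled_limit0_rec_cone A g :
  scaled_limit (conv_hull A) 0 g -> rec_cone (closure (conv_hull A)) g.
Proof.
move=> g_lim k k_cl t t_ge0; apply: closure_shift k_cl => k' Ak'.
exact: scaled_limit0_shift.
Qed.

End ConvexHull.

Section Normalization.
Variables (R : realType) (m : nat) (a : 'rV[R]_m) (eps : R) (F : set 'rV[R]_m).
Hypotheses (eps_gt0 : 0 < eps) (dotv_gt : forall y, F y -> eps < dotv a y).

Local Notation G := (normalize a @` F).

Let dotv_gt0 y : F y -> 0 < dotv a y.
Proof. by move/dotv_gt; apply: lt_trans. Qed.

Let dotv_conv_gt0 c : conv_hull F c -> 0 < dotv a c.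
Proof. by move/(conv_hull_dotv_gt dotv_gt); apply: lt_trans. Qed.

Lemma conv_hull_normalize c : conv_hull F c -> conv_hull G (normalize a c).
Proof.
move=> c_conv; have c_gt0 := dotv_conv_gt0 c_conv.
move: c_conv => [k [l [v [l_ge0 [l_sum [Fv cE]]]]]]; subst c.
rewrite /normalize dotv_sum.
have -> : \sum_(i < k) l i *: v i =
          \sum_(i < k) (l i * dotv a (v i)) *: normalize a (v i).
  apply: eq_bigr => i _; rewrite /normalize scalerA -mulrA mulfV ?mulr1 //.
  by rewrite gt_eqF ?dotv_gt0.
apply: conv_hull_reweight => [i||]; first by rewrite mulr_ge0 // ltW ?dotv_gt0.
  by move=> i; exists (v i).
by rewrite -dotv_sum.
Qed.

Lemma conv_hull_normalizeP g : conv_hull G g ->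
  dotv a g = 1 /\ exists r c, [/\ 0 < r, r <= eps^-1, conv_hull F c & g = r *: c].
Proof.
move=> [k [l [u [l_ge0 [l_sum [Gu ->]]]]]].
have [y yP] : {y : 'I_k -> 'rV[R]_m & forall i, F (y i) /\ u i = normalize a (y i)}.
  apply: (@choice _ _ (fun i y => F y /\ u i = normalize a y)) => i.
  by have [y Fy <-] := Gu i; exists y.
have Fy i : F (y i) by case: (yP i).
have uE i : u i = normalize a (y i) by case: (yP i).
split.
  rewrite dotv_sum -[RHS]l_sum; apply: eq_bigr => i _.
  by rewrite uE dotv_normalize ?mulr1 // gt_eqF ?dotv_gt0.
pose w i := l i / dotv a (y i).
have w_sum_gt0 : 0 < \sum_(i < k) w i.
  by apply: convex_comb_gt => // i; rewrite invr_gt0 dotv_gt0.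
exists (\sum_(i < k) w i), ((\sum_(i < k) w i)^-1 *: \sum_(i < k) w i *: y i).
split => //.
- rewrite -[leRHS]mul1r -l_sum mulr_suml; apply: ler_sum => i _.
  by rewrite ler_wpM2l // lef_pV2 ?posrE ?dotv_gt0 // ltW ?dotv_gt.
- apply: (conv_hull_reweight _ Fy w_sum_gt0) => i.
  by rewrite divr_ge0 // ltW ?dotv_gt0.
- rewrite scalerA mulfV ?scale1r ?gt_eqF //.
  by apply: eq_bigr => i _; rewrite uE /normalize scalerA.
Qed.

Lemma bounded_normalize : bounded_vecs F -> bounded_vecs G.
Proof.
move=> [M FM]; exists (eps^-1 * `|M|) => _ [y Fy <-] i.
have y_gt0 := dotv_gt0 Fy.
rewrite mxE normrM; apply: ler_pM => //.
  rewrite ger0_norm; last by rewrite invr_ge0 ltW.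
  by rewrite lef_pV2 ?posrE // ltW ?dotv_gt.
by apply: le_trans (ler_norm M); apply: FM.
Qed.

Lemma conv_hull_normalize_eq : F !=set0 -> bounded_vecs F ->
  conv_hull G = [set g | exists rho : R, 0 <= rho /\
                   scale_set rho (conv_hull F) g /\ dotv a g = 1].
Proof.
move=> [y Fy] F_bd; apply/seteqP; split => g.
  move=> /conv_hull_normalizeP[g1 [r [c [r_gt0 _ cF gE]]]]; subst g.
  exists r; split; first exact: ltW.
  by split => //; rewrite /scale_set r_gt0; exists c.
move=> [rho [_ [+ g1]]]; rewrite /scale_set; case: ifP => [_ [c cF gE]|_ g_rec].
  by subst g; rewrite (dotv_eq1_normalize g1); apply: conv_hull_normalize.
have g0 := rec_cone_bounded_eq0 (conv_hull_bounded F_bd) (conv_hull_self Fy) g_rec.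
by move: g1; rewrite g0 dotv0 => /eqP; rewrite eq_sym oner_eq0.
Qed.

Lemma conv_hull_unnormalize_eq (o : 'I_m) : F !=set0 -> bounded_vecs F ->
  (forall y, F y -> y 0 o = 1) ->
  conv_hull F = [set p | exists sigma : R, 0 <= sigma /\
                   scale_set sigma (conv_hull G) p /\ p 0 o = 1].
Proof.
move=> [y Fy] F_bd F1; apply/seteqP; split => p.
  move=> p_conv; have p_gt0 := dotv_conv_gt0 p_conv.
  exists (dotv a p); split; first exact: ltW.
  split; last exact: conv_hull_coord F1 _ p_conv.
  rewrite /scale_set p_gt0; exists (normalize a p); first exact: conv_hull_normalize.
  by rewrite /normalize scalerA mulfV ?scale1r // gt_eqF.
move=> [s [_ [+ p1]]]; rewrite /scale_set; case: ifP => [_ [g + pE]|_ p_rec].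
  move=> /conv_hull_normalizeP[_ [r [c [_ _ cF gE]]]].
  move: p1; rewrite -pE gE scalerA mxE (conv_hull_coord F1 cF) mulr1 => ->.
  by rewrite scale1r.
have Gy : conv_hull G (normalize a y) by apply: conv_hull_self; exists y.
have p0 := rec_cone_bounded_eq0 (conv_hull_bounded (bounded_normalize F_bd)) Gy p_rec.
by move: p1; rewrite p0 mxE => /eqP; rewrite eq_sym oner_eq0.
Qed.

Lemma closure_conv_hull_normalize y :
  closure (conv_hull F) y -> 0 < dotv a y -> closure (conv_hull G) (normalize a y).
Proof.
move=> y_cl y_gt0 B /(normalize_continuous (lt0r_neq0 y_gt0)) yB.
have [c [cF Bc]] := y_cl _ yB.
by exists (normalize a c); split => //; apply: conv_hull_normalize.
Qed.

Lemma closure_conv_hull_normalize_dotv g : closure (conv_hull G) g -> dotv a g = 1.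
Proof.
move=> /closure_normP g_cl.
pose N := \sum_(i < m) `|a 0 i|; have N_ge0 : 0 <= N by apply: sumr_ge0.
apply/eqP; apply: contraT => g1; pose d := `|dotv a g - 1|.
have d_gt0 : 0 < d by rewrite normr_gt0 subr_eq0.
have [q [qG gq]] := g_cl (d / (N + 1)) (divr_gt0 d_gt0 (ltr_wpDl N_ge0 ltr01)).
have [q1 _] := conv_hull_normalizeP qG.
have d_le : d <= N * `|g - q| by rewrite /d -q1 -dotvB; apply: dotv_norm_le.
have Ngq : N * `|g - q| <= N * (d / (N + 1)) by rewrite ler_wpM2l // ltW.
have : N * (d / (N + 1)) < d.
  by rewrite mulrA ltr_pdivrMr ?ltr_wpDl // mulrDr mulr1 mulrC ltrDl.
lra.
Qed.

Lemma rec_cone_closure_normalize g : F !=set0 ->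
  rec_cone (closure (conv_hull F)) g -> dotv a g = 1 -> closure (conv_hull G) g.
Proof.
move=> [y Fy] g_rec g1; apply/closure_normP => e e_gt0.
have e2_gt0 : 0 < e / 2 by rewrite divr_gt0.
have y_gt0 := dotv_gt0 Fy.
pose K := `|y - dotv a y *: g|; have K_ge0 : 0 <= K := normr_ge0 _.
pose t := K / (e / 2); have t_ge0 : 0 <= t by rewrite divr_ge0 // ltW.
have yt_cl : closure (conv_hull F) (y + t *: g).
  by apply: g_rec t_ge0; apply/subset_closure/conv_hull_self.
have yt_dotv : dotv a (y + t *: g) = dotv a y + t by rewrite dotvD dotvZ g1 mulr1.
have yt_gt0 : 0 < dotv a y + t by rewrite ltr_wpDr.
have yt_norm_cl : closure (conv_hull G) (normalize a (y + t *: g)).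
  by apply: closure_conv_hull_normalize yt_cl _; rewrite yt_dotv.
have [q [qG hq]] := closure_normP.1 yt_norm_cl _ e2_gt0.
exists q; split => //.
(* [normalize (y + t g) = g + (y - (a^T y) g) / (a^T y + t)] tends to [g]. *)
have g_near : `|g - normalize a (y + t *: g)| < e / 2.
  have -> : g - normalize a (y + t *: g) = - ((dotv a y + t)^-1 *: (y - dotv a y *: g)).
    by rewrite /normalize yt_dotv; apply/rowP => j; rewrite !mxE; field; rewrite gt_eqF.
  rewrite normrN normrZ ger0_norm ?invr_ge0 ?ltW // -/K mulrC ltr_pdivrMr //.
  have -> : K = e / 2 * t by rewrite /t mulrC divfK // gt_eqF.
  by rewrite mulrDr ltrDr mulr_gt0.
by have := le_lt_trans (ler_normD _ _) (ltrD g_near hq); rewrite addrA subrK -splitr.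
Qed.

Lemma closure_conv_hull_normalize_scaled g : closure (conv_hull G) g ->
  exists2 rho, 0 <= rho & scaled_limit (conv_hull F) rho g.
Proof.
move=> g_cl; pose S e := [set r | exists c,
  [/\ conv_hull F c, 0 < r, r <= eps^-1 & `|g - r *: c| < e]].
have S_neq0 e : 0 < e -> S e !=set0.
  move=> e_gt0; have [q [qG gq]] := closure_normP.1 g_cl e e_gt0.
  have [_ [r [c [r_gt0 r_le cF qE]]]] := conv_hull_normalizeP qG.
  by exists r, c; rewrite -qE.
have S_mono e1 e2 : 0 < e1 -> e1 <= e2 -> S e1 `<=` S e2.
  move=> _ e12 r [c [cF r_gt0 r_le gc]]; exists c; split => //.
  exact: lt_le_trans e12.
have S_seg e : 0 < e -> S e `<=` `[0, eps^-1]%classic.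
  move=> _ r [c [_ r_gt0 r_le _]] /=; rewrite in_itv /= r_le andbT.
  exact: ltW.
have [rho [rho_ge0 [_ rho_lim]]] := segment_nested_cluster S_neq0 S_mono S_seg.
exists rho => // e eta e_gt0 eta_gt0.
have [r [[c [cF r_gt0 _ gc]] rr]] := rho_lim e eta e_gt0 eta_gt0.
by exists r, c.
Qed.

Lemma closure_conv_hull_normalize_eq : F !=set0 ->
  closure (conv_hull G) = [set g | exists rho : R, 0 <= rho /\
                   scale_set rho (closure (conv_hull F)) g /\ dotv a g = 1].
Proof.
move=> F_neq0; apply/seteqP; split => g.
  move=> g_cl; have [rho rho_ge0 g_lim] := closure_conv_hull_normalize_scaled g_cl.
  exists rho; split => //; split; last exact: closure_conv_hull_normalize_dotv.
  rewrite /scale_set; case: ifPn => [rho_gt0|].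
    exists (rho^-1 *: g); first exact: scaled_limit_closure.
    by rewrite scalerA mulfV ?scale1r // gt_eqF.
  rewrite -leNgt => rho_le0; have rho0 : rho = 0 by apply/eqP; rewrite eq_le rho_le0.
  by apply: scaled_limit0_rec_cone; rewrite -rho0.
move=> [rho [_ [+ g1]]]; rewrite /scale_set; case: ifP => [rho_gt0 [c c_cl gE]|_ g_rec].
  subst g; have c_gt0 : 0 < dotv a c by rewrite -(pmulr_rgt0 _ rho_gt0) -dotvZ g1.
  by rewrite (dotv_eq1_normalize g1); apply: closure_conv_hull_normalize.
exact: rec_cone_closure_normalize.
Qed.

End Normalization.

Theorem theorem2 (R : realType) (n m : nat) (X : set 'rV[R]_n)
  (f : 'rV[R]_n -> 'rV[R]_m) (alpha : 'rV[R]_m) :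
  let F := [set f x | x in X] in
  let G := [set (dotv alpha (f x))^-1 *: f x | x in X] in
  F !=set0 -> G !=set0 ->
  (exists eps : R, 0 < eps /\ forall x, X x -> eps < dotv alpha (f x)) ->
  (* (i) *)
  (bounded_vecs F ->
     conv_hull G = [set g | exists rho : R, 0 <= rho /\
                      scale_set rho (conv_hull F) g /\ dotv alpha g = 1]) /\
  (* (ii) *)
  (forall hm : (0 < m)%N, bounded_vecs F ->
     (forall x, X x -> f x 0 (Ordinal hm) = 1) ->
     conv_hull F = [set p | exists sigma : R, 0 <= sigma /\
                      scale_set sigma (conv_hull G) p /\ p 0 (Ordinal hm) = 1]) /\
  (* (iii) *)
  closure (conv_hull G) = [set g | exists rho : R, 0 <= rho /\
                      scale_set rho (closure (conv_hull F)) g /\ dotv alpha g = 1].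
Proof.
move=> F G F_neq0 _ [eps [eps_gt0 f_gt]].
have F_gt y : F y -> eps < dotv alpha y by move=> [x Xx <-]; apply: f_gt.
have -> : G = normalize alpha @` F by rewrite image_comp.
split; first exact: conv_hull_normalize_eq eps_gt0 F_gt F_neq0.
split; last exact: closure_conv_hull_normalize_eq eps_gt0 F_gt F_neq0.
move=> hm F_bd f1; have F1 y : F y -> y 0 (Ordinal hm) = 1 by move=> [x Xx <-]; apply: f1.
by move: (conv_hull_unnormalize_eq eps_gt0 F_gt F_neq0 F_bd F1).
Qed.
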